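(* Let $t\in\mathtt T_J$, $\mathtt D$ a list context, $\Gamma$ an environment, $\sigma$ a type and $n\in\mathbb N$. Then $\Gamma\vdash^n \mathtt D\langle\lambda x.t\rangle:\sigma$ is derivable in $\cap J$ if and only if $\Gamma\vdash^n \lambda x.\mathtt D\langle t\rangle:\sigma$ is derivable in $\cap J$ (where variables bound by $\mathtt D$ are distinct from $x$ and not free in... are chosen by $\alpha$-conversion so that $x$ does not occur in $\mathtt D$).
   Context: Terms $\mathtt T_J$: $t,u,r ::= x \mid \lambda x.t \mid t(u,y.r)$ ($y$ bound in $r$), up to $\alpha$-equivalence. List contexts $\mathtt D ::= \Diamond \mid t(u,y.\mathtt D)$. System $\cap J$: types $\sigma,\tau ::= \alpha \mid \mathcal M\to\sigma$, where $\mathcal M=[\sigma_i]_{i\in I}$ is a finite (possibly empty) multiset of types; $\sqcup$ is multiset union. Environments $\Gamma$ map variables to multisets, with finitely many non-empty; $\Gamma\wedge\Delta$ is pointwise multiset union; $\Gamma;x:\mathcal M$ extends $\Gamma$ (with $x\notin\mathrm{dom}\,\Gamma$). Choice operator: $\mathrm{ch}(\mathcal M)=\mathcal M$ if $\mathcal M\ne[\,]$, and $\mathrm{ch}([\,])=[\tau]$ for an arbitrary type $\tau$ chosen in each rule instance. Rules: (var) $x:[\sigma]\vdash x:\sigma$; (abs) from $\Gamma;x:\mathcal M\vdash t:\sigma$ infer $\Gamma\vdash\lambda x.t:\mathcal M\to\sigma$; (many) from $(\Gamma_i\vdash t:\sigma_i)_{i\in I}$ with $I\neq\emptyset$ infer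 $\wedge_{i\in I}\Gamma_i\vdash t:[\sigma_i]_{i\in I}$; (app) from $\Gamma\vdash t:\mathrm{ch}([\mathcal M_i\to\tau_i]_{i\in I})$, $\Delta\vdash u:\mathrm{ch}(\sqcup_{i\in I}\mathcal M_i)$ and $\Lambda;y:[\tau_i]_{i\in I}\vdash r:\sigma$ infer $\Gamma\wedge\Delta\wedge\Lambda\vdash t(u,y.r):\sigma$. $\Gamma\vdash^n t:\sigma$ means a derivation whose size is $n$, the size being the number of rule instances other than (many). *)

(* System cap-J (non-idempotent intersection types for the
   lambda-calculus with generalized applications). *)
From Stdlib Require Import List Permutation Arith.
Import ListNotations.

Definition var := nat.

Inductive term : Type :=
| Var : var -> term
| Lam : var -> term -> term
| JApp : term -> term -> var -> term -> term.  (* JApp t u y r = t(u, y.r) *)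

Inductive lctx : Type :=
| Hole : lctx
| LApp : term -> term -> var -> lctx -> lctx.

Fixpoint plug (D : lctx) (s : term) : term :=
  match D with
  | Hole => s
  | LApp t u y D' => JApp t u y (plug D' s)
  end.

Fixpoint occurs (x : var) (t : term) : Prop :=
  match t with
  | Var z => x = z
  | Lam z t' => x = z \/ occurs x t'
  | JApp t1 t2 y r => occurs x t1 \/ occurs x t2 \/ x = y \/ occurs x r
  end.

Fixpoint occurs_ctx (x : var) (D : lctx) : Prop :=
  match D with
  | Hole => False
  | LApp t u y D' => occurs x t \/ occurs x u \/ x = y \/ occurs_ctx x D'
  end.

(** Types: sigma ::= alpha | M -> sigma, multisets represented by lists. *)
Inductive ty : Type :=
| TVar : nat -> ty
| TArr : list ty -> ty -> ty.

(** Equality of types, treating the lists inside arrows as multisets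
    (recursively). *)
Inductive teq : ty -> ty -> Prop :=
| teq_var a : teq (TVar a) (TVar a)
| teq_arr M L M' s s' :
    Permutation M L -> Forall2 teq L M' -> teq s s' ->
    teq (TArr M s) (TArr M' s').

Definition meq (M M' : list ty) : Prop :=
  exists L, Permutation M L /\ Forall2 teq L M'.

Definition env := var -> list ty.

Definition env_eq (G D : env) : Prop := forall z, meq (G z) (D z).

Definition env_and (G D : env) : env := fun z => G z ++ D z.

Definition env_single (x : var) (s : ty) : env :=
  fun z => if Nat.eqb z x then [s] else [].

Definition env_rem (G : env) (x : var) : env :=
  fun z => if Nat.eqb z x then [] else G z.

Definition ch (tau : ty) (M : list ty) : list ty :=
  match M with [] => [tau] | _ => M end.

(** [der G t s n] : G |-^n t : s ; [derm G t M n] : the (many) rule,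
    (which does not count in the size). *)
Inductive der : env -> term -> ty -> nat -> Prop :=
| der_var G x s :
    env_eq G (env_single x s) ->
    der G (Var x) s 1
| der_abs G G' x t s n :
    der G' t s n ->
    env_eq G (env_rem G' x) ->
    der G (Lam x t) (TArr (G' x) s) (S n)
| der_app G Gt Du Lr t u y r s (ps : list (list ty * ty)) tau1 tau2
          At Bu n1 n2 n3 :
    derm Gt t At n1 ->
    meq At (ch tau1 (map (fun p => TArr (fst p) (snd p)) ps)) ->
    derm Du u Bu n2 ->
    meq Bu (ch tau2 (concat (map fst ps))) ->
    der Lr r s n3 ->
    meq (Lr y) (map snd ps) ->
    env_eq G (env_and Gt (env_and Du (env_rem Lr y))) ->
    der G (JApp t u y r) s (S (n1 + n2 + n3))
with derm : env -> term -> list ty -> nat -> Prop :=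
| derm_one G t s n :
    der G t s n -> derm G t [s] n
| derm_cons G D t s M n m :
    der G t s n -> derm D t M m -> derm (env_and G D) t (s :: M) (n + m).

(* Induction on D reduces the theorem to commuting one abstraction with one
   generalized application: t(u, y.λx.r) versus λx.t(u, y.r), where x <> y and
   x occurs neither in t nor in u.  The environments typing t and u are then
   empty at x, so x collects the same multiset whether (abs) is applied above
   or below (app); the two derivations use the same rule instances, hence have
   the same size. *)

From Stdlib Require Import List Permutation Arith Lia Setoid Morphisms.
Import ListNotations.

Lemma Forall2_compose {A B C} (Q : B -> C -> Prop) (T : A -> C -> Prop) l1 l2 l3 :
  Forall2 (fun a b => forall c, Q b c -> T a c) l1 l2 -> Forall2 Q l2 l3 -> Forall2 T l1 l3.
Proof.
  intros H; revert l3; induction H; intros l3 H3; inversion H3; subst; constructor; auto.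
Qed.

Lemma Forall2_Permutation_r {A B} (R : A -> B -> Prop) l1 l2 l2' :
  Forall2 R l1 l2 -> Permutation l2 l2' ->
  exists l1', Permutation l1 l1' /\ Forall2 R l1' l2'.
Proof.
  intros H P; apply Forall2_flip in H.
  destruct (Permutation_Forall2 P H) as [l1' [P1 H1]].
  exists l1'; split; [exact P1 | exact (Forall2_flip H1)].
Qed.

Fixpoint teq_refl (a : ty) : teq a a :=
  match a with
  | TVar n => teq_var n
  | TArr M s => teq_arr M M M s s (Permutation_refl M)
      ((fix refl_list (l : list ty) : Forall2 teq l l :=
          match l with
          | [] => Forall2_nil _
          | b :: l' => Forall2_cons _ _ (teq_refl b) (refl_list l')
          end) M) (teq_refl s)
  end.

Fixpoint teq_nested_ind (P : ty -> ty -> Prop)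
  (Hvar : forall a, P (TVar a) (TVar a))
  (Harr : forall M L M' s s', Permutation M L -> Forall2 teq L M' -> Forall2 P L M' ->
     teq s s' -> P s s' -> P (TArr M s) (TArr M' s'))
  (a b : ty) (H : teq a b) {struct H} : P a b :=
  match H with
  | teq_var n => Hvar n
  | teq_arr M L M' s s' HP HF Hs => Harr M L M' s s' HP HF
      ((fix ind_list (l1 l2 : list ty) (F : Forall2 teq l1 l2) {struct F} : Forall2 P l1 l2 :=
          match F with
          | Forall2_nil _ => Forall2_nil _
          | Forall2_cons _ _ h F' =>
              Forall2_cons _ _ (teq_nested_ind P Hvar Harr _ _ h) (ind_list _ _ F')
          end) L M' HF) Hs (teq_nested_ind P Hvar Harr _ _ Hs)
  end.

Lemma teq_sym a b : teq a b -> teq b a.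
Proof.
  revert a b; apply teq_nested_ind; [constructor |].
  intros M L M' s s' HP _ HF _ Hs.
  destruct (Forall2_Permutation_r _ _ _ _ (Forall2_flip HF) (Permutation_sym HP))
    as [L' [HP' HF']].
  econstructor; eauto.
Qed.

Lemma teq_trans a b c : teq a b -> teq b c -> teq a c.
Proof.
  intros H; revert a b H c.
  apply (teq_nested_ind (fun a b => forall c, teq b c -> teq a c)); [easy |].
  intros M L M' s s' HP _ HF _ Hs c Hc; inversion Hc as [| ? L2 M'' ? s'' HP2 HF2 Hs2]; subst.
  destruct (Forall2_Permutation_r _ _ _ _ HF HP2) as [L' [HP' HF']].
  apply teq_arr with L'; [now transitivity L | exact (Forall2_compose _ _ _ _ _ HF' HF2) | auto].
Qed.

#[local] Instance meq_equiv : Equivalence meq.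
Proof.
  split.
  - intros M; exists M; split; [reflexivity |].
    induction M; constructor; auto using teq_refl.
  - intros M N [L [P F]].
    destruct (Forall2_Permutation_r _ _ _ _ (Forall2_flip F) (Permutation_sym P))
      as [L' [P' F']].
    exists L'; split; [exact P' | exact (Forall2_impl _ (fun a b => teq_sym b a) F')].
  - intros M N K [L [P F]] [L' [P' F']].
    destruct (Forall2_Permutation_r _ _ _ _ F P') as [L2 [P2 F2]].
    exists L2; split; [now transitivity L |].
    refine (Forall2_compose teq _ _ _ _ _ F').
    exact (Forall2_impl _ (fun a b h c => teq_trans a b c h) F2).
Qed.

Lemma meq_app A A' B B' : meq A A' -> meq B B' -> meq (A ++ B) (A' ++ B').
Proof.
  intros [L [P F]] [L' [P' F']]; exists (L ++ L'); split.
  - now apply Permutation_app.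
  - now apply Forall2_app.
Qed.

Lemma meq_nil_r M : meq M [] -> M = [].
Proof.
  intros [L [P F]]; inversion F; subst.
  now apply Permutation_nil, Permutation_sym.
Qed.

#[local] Instance env_eq_equiv : Equivalence env_eq.
Proof.
  split.
  - intros G z; reflexivity.
  - intros G D H z; now symmetry.
  - intros G D E H H' z; now transitivity (D z).
Qed.

#[local] Instance env_and_proper : Proper (env_eq ==> env_eq ==> env_eq) env_and.
Proof. intros G G' HG D D' HD z; now apply meq_app. Qed.

#[local] Instance env_rem_proper : Proper (env_eq ==> eq ==> env_eq) env_rem.
Proof. intros G G' HG x _ <- z; unfold env_rem; now destruct (z =? x). Qed.

Lemma der_env_eq G G' t s n : env_eq G G' -> der G t s n -> der G' t s n.
Proof.
  intros E H; destruct H; econstructor; eauto; now rewrite <- E.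
Qed.

#[local] Instance der_proper : Proper (env_eq ==> eq ==> eq ==> eq ==> iff) der.
Proof.
  intros G G' E t _ <- s _ <- n _ <-; split; apply der_env_eq; [exact E | now symmetry].
Qed.

Scheme der_mind := Induction for der Sort Prop
with derm_mind := Induction for derm Sort Prop.
Combined Scheme der_derm_mind from der_mind, derm_mind.

Lemma env_eq_nil G D x : env_eq G D -> D x = [] -> G x = [].
Proof. intros E Dx; apply meq_nil_r; rewrite <- Dx; apply E. Qed.

Lemma der_derm_not_occurs_env_nil x :
  (forall G t s n, der G t s n -> ~ occurs x t -> G x = []) /\
  (forall G t M n, derm G t M n -> ~ occurs x t -> G x = []).
Proof.
  apply der_derm_mind; simpl.
  - intros G z s E Hx; apply (env_eq_nil _ _ _ E); unfold env_single.
    now destruct (Nat.eqb_spec x z).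
  - intros G G' z t s n _ IH E Hx; apply (env_eq_nil _ _ _ E); unfold env_rem.
    destruct (x =? z); [reflexivity | tauto].
  - intros G Gt Du Lr t u y r s ps tau1 tau2 At Bu n1 n2 n3 _ IHt _ _ IHu _ _ IHr _ E Hx.
    apply (env_eq_nil _ _ _ E); unfold env_and, env_rem.
    rewrite IHt, IHu by tauto; destruct (Nat.eqb_spec x y); [reflexivity | tauto].
  - tauto.
  - intros G D t s M n m _ IH1 _ IH2 Hx; unfold env_and; now rewrite IH1, IH2.
Qed.

Lemma derm_not_occurs_env_nil x G t M n : derm G t M n -> ~ occurs x t -> G x = [].
Proof. apply der_derm_not_occurs_env_nil. Qed.

Lemma der_abs_meq G G' x t s M n :
  der G' t s n -> meq (G' x) M -> env_eq G (env_rem G' x) ->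
  der G (Lam x t) (TArr M s) (S n).
Proof.
  intros Ht HM HG.
  set (G'' := fun z => if z =? x then M else G' z).
  assert (E : env_eq G' G'').
  { intros z; unfold G''; destruct (Nat.eqb_spec z x); [now subst | reflexivity]. }
  replace M with (G'' x) by (unfold G''; now rewrite Nat.eqb_refl).
  apply der_abs; [now rewrite <- E | now rewrite <- E].
Qed.

Lemma env_rem_japp_env Gt Du L x y :
  Gt x = [] -> Du x = [] ->
  env_eq (env_rem (env_and Gt (env_and Du (env_rem L y))) x)
         (env_and Gt (env_and Du (env_rem (env_rem L x) y))).
Proof.
  intros Gx Dx z; unfold env_rem, env_and.
  destruct (Nat.eqb_spec z x) as [-> |]; [rewrite Gx, Dx |]; now destruct (_ =? y).
Qed.

Lemma japp_env_at_fresh Gt Du L x y :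
  x <> y -> Gt x = [] -> Du x = [] -> env_and Gt (env_and Du (env_rem L y)) x = L x.
Proof.
  intros Hxy Gx Dx; unfold env_and, env_rem; rewrite Gx, Dx.
  now destruct (Nat.eqb_spec x y).
Qed.

Lemma der_lam_out_of_japp t u y x r G s n :
  x <> y -> ~ occurs x t -> ~ occurs x u ->
  der G (JApp t u y (Lam x r)) s n -> der G (Lam x (JApp t u y r)) s n.
Proof.
  intros Hxy Ht Hu H.
  inversion H as [| | ? Gt Du Lr ? ? ? ? ? ps tau1 tau2 At Bu n1 n2 n3 Dt HA Du' HB Dr Hy HG];
    subst.
  inversion Dr as [| ? G' ? ? s' n' Dbody HLr |]; subst.
  pose proof (derm_not_occurs_env_nil _ _ _ _ _ Dt Ht) as Gx.
  pose proof (derm_not_occurs_env_nil _ _ _ _ _ Du' Hu) as Dx.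
  replace (S (n1 + n2 + S n')) with (S (S (n1 + n2 + n'))) by lia.
  apply der_abs_meq with (G' := env_and Gt (env_and Du (env_rem G' y))).
  - eapply der_app with (Lr := G'); [exact Dt | exact HA | exact Du' | exact HB | exact Dbody | |].
    + rewrite <- Hy, (HLr y); unfold env_rem.
      now destruct (Nat.eqb_spec y x); [congruence |].
    + reflexivity.
  - now rewrite japp_env_at_fresh.
  - now rewrite HG, HLr, env_rem_japp_env.
Qed.

Lemma der_lam_into_japp t u y x r G s n :
  x <> y -> ~ occurs x t -> ~ occurs x u ->
  der G (Lam x (JApp t u y r)) s n -> der G (JApp t u y (Lam x r)) s n.
Proof.
  intros Hxy Ht Hu H.
  inversion H as [| ? G' ? ? s' n' Dbody HG |]; subst.
  inversion Dbody as [| | ? Gt Du Lr ? ? ? ? ? ps tau1 tau2 At Bu n1 n2 n3 Dt HA Du' HB Dr Hy HG'];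
    subst.
  pose proof (derm_not_occurs_env_nil _ _ _ _ _ Dt Ht) as Gx.
  pose proof (derm_not_occurs_env_nil _ _ _ _ _ Du' Hu) as Dx.
  replace (S (S (n1 + n2 + n3))) with (S (n1 + n2 + S n3)) by lia.
  eapply der_app with (Lr := env_rem Lr x); [exact Dt | exact HA | exact Du' | exact HB | | |].
  - apply der_abs_meq with (G' := Lr); [exact Dr | | reflexivity].
    rewrite (HG' x), japp_env_at_fresh by assumption; reflexivity.
  - rewrite <- Hy; unfold env_rem at 1.
    now destruct (Nat.eqb_spec y x); [congruence |].
  - now rewrite HG, HG', env_rem_japp_env.
Qed.

Lemma der_japp_body t u y r r' G s n :
  (forall G s n, der G r s n <-> der G r' s n) ->
  der G (JApp t u y r) s n <-> der G (JApp t u y r') s n.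
Proof.
  intros Hr; split; intros H; inversion H; subst; econstructor; eauto; now apply Hr.
Qed.

Theorem mainTheorem7 (t : term) (D : lctx) (x : var) (G : env) (s : ty) (n : nat) :
  ~ occurs_ctx x D ->
  (der G (plug D (Lam x t)) s n <-> der G (Lam x (plug D t)) s n).
Proof.
  revert G s n; induction D as [| t1 u1 y1 D IH]; intros G s n Hx; simpl in *.
  - reflexivity.
  - rewrite (der_japp_body _ _ _ _ (Lam x (plug D t))) by (intros; apply IH; tauto).
    split; [apply der_lam_out_of_japp | apply der_lam_into_japp]; tauto.
Qed.
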